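(* Let $R$ be a spherical polygon contained in the interior of a hemisphere of the unit sphere, and let $\mathcal D$ be a Spherical Diagram. Let $x$ be a point of the union of the arcs of $\mathcal D$ lying in the interior of $R$. Then for every great circle $\gamma$ through $x$ there are arcs of $\mathcal D$ that thrust the boundary of $R$ at two distinct points $y$ and $z$, where $y$ and $z$ lie in the two different closed hemispheres bounded by $\gamma$ (i.e., on opposite sides of $\gamma$ or on $\gamma$), and both $y$ and $z$ are internally $R$-connected (with respect to $\mathcal D$) with $x$.
   Context: A geodesic arc on the unit sphere in $\mathbb R^3$ is the unique shortest curve joining two non-antipodal points. An arc $a$ blocks an arc $b$ (equivalently, $b$ hits $a$) if an endpoint of $b$ lies in the relative interior of $a$. A Spherical Diagram (SD) is a finite non-empty collection $\mathcal D$ of pairwise interior-disjoint geodesic arcs on the unit sphere such that each arc of $\mathcal D$ is blocked by arcs of $\mathcal D$ at each of its endpoints. For a spherical polygon $R$ contained in the interior of a hemisphere, an arc $a$ thrusts the boundary of $R$ at a point $y$ if $y\in a\cap\partial R$ and $a$ also intersects the interior of $R$. Two points are internally $R$-connected (with respect to $\mathcal D$) if there is a path between them contained in the union of the arcs of $\mathcal D$, all of whose points except possibly its endpoints lie in the interior of $R$. *)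

From Stdlib Require Import Reals Lra List.
Import ListNotations.
Open Scope R_scope.

Record pt := Pt { px : R; py : R; pz : R }.

Definition origin : pt := Pt 0 0 0.
Definition dot (p q : pt) : R := px p * px q + py p * py q + pz p * pz q.
Definition padd (p q : pt) : pt := Pt (px p + px q) (py p + py q) (pz p + pz q).
Definition pscale (c : R) (p : pt) : pt := Pt (c * px p) (c * py p) (c * pz p).
Definition psub (p q : pt) : pt := padd p (pscale (-1) q).
Definition pnorm (p : pt) : R := sqrt (dot p p).
Definition dist (p q : pt) : R := pnorm (psub p q).

Definition on_sphere (p : pt) : Prop := dot p p = 1.
Definition normalize (p : pt) : pt := pscale (/ pnorm p) p.

Record arc := Arc { src : pt; dst : pt }.

Definition valid_arc (g : arc) : Prop :=
  on_sphere (src g) /\ on_sphere (dst g) /\ src g <> dst g /\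
  dst g <> pscale (-1) (src g).

(* the minor great-circle arc = radial projection of the chord *)
Definition arc_pt (g : arc) (t : R) : pt :=
  normalize (padd (pscale (1 - t) (src g)) (pscale t (dst g))).

Definition on_arc (g : arc) (p : pt) : Prop :=
  exists t, 0 <= t <= 1 /\ p = arc_pt g t.

Definition in_relint (g : arc) (p : pt) : Prop :=
  exists t, 0 < t < 1 /\ p = arc_pt g t.

Definition blocks (a b : arc) : Prop :=
  in_relint a (src b) \/ in_relint a (dst b).

Definition SD (D : list arc) : Prop :=
  D <> [] /\
  (forall g, In g D -> valid_arc g) /\
  (forall i j g h, i <> j -> nth_error D i = Some g -> nth_error D j = Some h ->
     forall p, in_relint g p -> in_relint h p -> False) /\
  (forall g, In g D ->
     (exists c, In c D /\ in_relint c (src g)) /\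
     (exists c, In c D /\ in_relint c (dst g))).

Definition on_D (D : list arc) (p : pt) : Prop := exists g, In g D /\ on_arc g p.

Definition in_interior (S : pt -> Prop) (p : pt) : Prop :=
  on_sphere p /\ S p /\
  exists e, 0 < e /\ forall q, on_sphere q -> dist p q < e -> S q.

Definition in_closure (S : pt -> Prop) (p : pt) : Prop :=
  on_sphere p /\ forall e, 0 < e -> exists q, S q /\ dist p q < e.

Definition in_boundary (S : pt -> Prop) (p : pt) : Prop :=
  in_closure S p /\ ~ in_interior S p.

Definition poly_edge (vs : list pt) (i : nat) : arc :=
  Arc (nth i vs origin) (nth (S i mod length vs) vs origin).

Definition simple_polygon (vs : list pt) : Prop :=
  (3 <= length vs)%nat /\ NoDup vs /\
  (forall i, (i < length vs)%nat -> valid_arc (poly_edge vs i)) /\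
  (forall i j p, (i < length vs)%nat -> (j < length vs)%nat -> i <> j ->
     on_arc (poly_edge vs i) p -> on_arc (poly_edge vs j) p ->
     (p = src (poly_edge vs i) \/ p = dst (poly_edge vs i)) /\
     (p = src (poly_edge vs j) \/ p = dst (poly_edge vs j))).

Definition polygon_curve (vs : list pt) (p : pt) : Prop :=
  exists i, (i < length vs)%nat /\ on_arc (poly_edge vs i) p.

Definition spherical_polygon (Rg : pt -> Prop) : Prop :=
  (forall p, Rg p -> on_sphere p) /\
  (forall p, in_closure Rg p -> Rg p) /\
  (forall p, Rg p -> in_closure (in_interior Rg) p) /\
  exists vs, simple_polygon vs /\
    forall p, in_boundary Rg p <-> polygon_curve vs p.

Definition in_open_hemisphere (Rg : pt -> Prop) : Prop :=
  exists h, on_sphere h /\ forall p, Rg p -> 0 < dot h p.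

Definition thrusts (g : arc) (Rg : pt -> Prop) (y : pt) : Prop :=
  on_arc g y /\ in_boundary Rg y /\ exists q, on_arc g q /\ in_interior Rg q.

Definition int_connected (D : list arc) (Rg : pt -> Prop) (x y : pt) : Prop :=
  exists f : R -> pt,
    f 0 = x /\ f 1 = y /\
    (forall t, 0 <= t <= 1 -> on_D D (f t)) /\
    (forall t, 0 < t < 1 -> in_interior Rg (f t)) /\
    (forall t, 0 <= t <= 1 -> forall e, 0 < e -> exists d, 0 < d /\
       forall s, 0 <= s <= 1 -> Rabs (s - t) < d -> dist (f s) (f t) < e).

(* Let h be the pole of an open hemisphere containing R and m := n x h.  Compare
   points of that hemisphere lexicographically by the coordinates
   (n.p / h.p, m.p / h.p) of their central projection to the plane h.v = 1; great
   circle arcs project to segments, so the order is monotone along every arc.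
   Starting at x, walk forward along arcs of D: the current arc either leaves the
   interior of R, and then thrusts the boundary at a point y beyond x, or ends at an
   interior point, which lies inside a blocking arc where the walk continues.  An arc
   that has been left behind never comes back into play, so the walk ends.  As n.x = 0,
   y beyond x forces n.y >= 0; the walk for the opposite order (-n, -m) gives z with
   n.z <= 0, and z <> y because no point is beyond x in both orders. *)

From Stdlib Require Import Reals Lra Lia List Classical Wf_nat.
Open Scope R_scope.

Lemma pt_eq p q : px p = px q -> py p = py q -> pz p = pz q -> p = q.
Proof. destruct p, q; simpl; intros; subst; reflexivity. Qed.

Lemma dot_self_ge0 p : 0 <= dot p p.
Proof. unfold dot; nra. Qed.

Lemma dot_self_eq0 p : dot p p = 0 -> p = origin.
Proof. unfold dot; intros; apply pt_eq; simpl; nra. Qed.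

Lemma dot_sphere_gt_m1 a b :
  on_sphere a -> on_sphere b -> b <> pscale (-1) a -> -1 < dot a b.
Proof.
  unfold on_sphere; intros Ha Hb Hab.
  destruct (Rlt_or_le (-1) (dot a b)) as [|Hle]; [assumption|].
  exfalso; apply Hab.
  assert (Hsum : padd a b = origin).
  { apply dot_self_eq0, Rle_antisym; [|apply dot_self_ge0].
    replace (dot (padd a b) (padd a b)) with (dot a a + dot b b + 2 * dot a b)
      by (unfold dot, padd; simpl; ring).
    lra. }
  apply (f_equal px) in Hsum as Ex; apply (f_equal py) in Hsum as Ey;
    apply (f_equal pz) in Hsum as Ez.
  simpl in Ex, Ey, Ez; apply pt_eq; simpl; lra.
Qed.

Lemma cauchy_schwarz u v : dot u v <= pnorm u * pnorm v.
Proof.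
  unfold pnorm; rewrite <- sqrt_mult by apply dot_self_ge0.
  destruct (Rle_or_lt (dot u v) 0).
  { pose proof (sqrt_pos (dot u u * dot v v)); lra. }
  rewrite <- (sqrt_square (dot u v)) by lra.
  apply sqrt_le_1; [nra| pose proof (dot_self_ge0 u); pose proof (dot_self_ge0 v); nra |].
  (* Lagrange's identity: |u|^2 |v|^2 = (u.v)^2 + |u x v|^2 *)
  unfold dot; destruct u as [a1 a2 a3], v as [b1 b2 b3]; simpl.
  pose proof (Rle_0_sqr (a1 * b2 - a2 * b1)); pose proof (Rle_0_sqr (a1 * b3 - a3 * b1));
    pose proof (Rle_0_sqr (a2 * b3 - a3 * b2)); unfold Rsqr in *; nra.
Qed.

Lemma pnorm_padd_le u v : pnorm (padd u v) <= pnorm u + pnorm v.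
Proof.
  pose proof (cauchy_schwarz u v).
  pose proof (sqrt_pos (dot u u)); pose proof (sqrt_pos (dot v v)).
  pose proof (sqrt_sqrt _ (dot_self_ge0 u)); pose proof (sqrt_sqrt _ (dot_self_ge0 v)).
  unfold pnorm in *; rewrite <- (sqrt_square (sqrt (dot u u) + sqrt (dot v v))) by lra.
  apply sqrt_le_1; [apply dot_self_ge0 | nra |].
  replace (dot (padd u v) (padd u v)) with (dot u u + dot v v + 2 * dot u v)
    by (unfold dot, padd; simpl; ring).
  nra.
Qed.

Lemma dist_triangle a b c : dist a c <= dist a b + dist b c.
Proof.
  unfold dist; replace (psub a c) with (padd (psub a b) (psub b c))
    by (apply pt_eq; unfold psub, padd, pscale; simpl; ring).
  apply pnorm_padd_le.
Qed.

Lemma dist_sym p q : dist p q = dist q p.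
Proof. unfold dist, pnorm; f_equal; unfold dot, psub, padd, pscale; simpl; ring. Qed.

Lemma dist_le_coords p q :
  dist p q <= Rabs (px p - px q) + Rabs (py p - py q) + Rabs (pz p - pz q).
Proof.
  unfold dist, pnorm.
  set (a := px p - px q); set (b := py p - py q); set (c := pz p - pz q).
  replace (dot (psub p q) (psub p q)) with (a² + b² + c²)
    by (unfold a, b, c, Rsqr, dot, psub, padd, pscale; simpl; ring).
  rewrite (Rsqr_abs a), (Rsqr_abs b), (Rsqr_abs c); unfold Rsqr.
  pose proof (Rabs_pos a); pose proof (Rabs_pos b); pose proof (Rabs_pos c).
  rewrite <- sqrt_square by lra; apply sqrt_le_1; nra.
Qed.

Lemma normalize_on_sphere p : 0 < dot p p -> on_sphere (normalize p).
Proof.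
  intros Hp; unfold on_sphere, normalize, pnorm.
  replace (dot (pscale (/ sqrt (dot p p)) p) (pscale (/ sqrt (dot p p)) p))
    with (/ sqrt (dot p p) * / sqrt (dot p p) * dot p p) by (unfold dot, pscale; simpl; ring).
  rewrite <- Rinv_mult, sqrt_sqrt by lra; field; lra.
Qed.

Lemma normalize_id a : on_sphere a -> normalize a = a.
Proof.
  unfold on_sphere, normalize, pnorm; intros ->; rewrite sqrt_1, Rinv_1.
  apply pt_eq; unfold pscale; simpl; ring.
Qed.

Definition chord (g : arc) (t : R) : pt := padd (pscale (1 - t) (src g)) (pscale t (dst g)).

Lemma arc_pt_chord g t : arc_pt g t = normalize (chord g t).
Proof. reflexivity. Qed.

Lemma chord_dot_pos g t : valid_arc g -> 0 <= t <= 1 -> 0 < dot (chord g t) (chord g t).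
Proof.
  intros (Ha & Hb & _ & Hanti) Ht.
  pose proof (dot_sphere_gt_m1 _ _ Ha Hb Hanti).
  unfold on_sphere in *.
  replace (dot (chord g t) (chord g t)) with
    ((1 - t) * (1 - t) * dot (src g) (src g) + t * t * dot (dst g) (dst g)
     + 2 * t * (1 - t) * dot (src g) (dst g))
    by (unfold chord, dot, padd, pscale; simpl; ring).
  rewrite Ha, Hb.
  (* = (1 - 2t)^2 + 2t(1-t)(1 + src.dst), and the two terms never vanish together *)
  assert (0 <= t * (1 - t)) by nra.
  destruct (Req_dec t (1/2)); [subst; nra|].
  assert (0 < (1 - 2 * t) * (1 - 2 * t)) by (assert (1 - 2 * t <> 0) by lra; nra).
  nra.
Qed.

Lemma arc_pt_on_sphere g t : valid_arc g -> 0 <= t <= 1 -> on_sphere (arc_pt g t).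
Proof. intros; apply normalize_on_sphere, chord_dot_pos; assumption. Qed.

Lemma arc_pt_0 g : on_sphere (src g) -> arc_pt g 0 = src g.
Proof.
  intros H; rewrite arc_pt_chord, <- (normalize_id _ H); f_equal.
  apply pt_eq; unfold chord, padd, pscale; simpl; ring.
Qed.

Lemma arc_pt_1 g : on_sphere (dst g) -> arc_pt g 1 = dst g.
Proof.
  intros H; rewrite arc_pt_chord, <- (normalize_id _ H); f_equal.
  apply pt_eq; unfold chord, padd, pscale; simpl; ring.
Qed.

Definition reverse_arc (g : arc) : arc := Arc (dst g) (src g).

Lemma reverse_arcK g : reverse_arc (reverse_arc g) = g.
Proof. destruct g; reflexivity. Qed.

Lemma arc_pt_reverse g t : arc_pt (reverse_arc g) t = arc_pt g (1 - t).
Proof.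
  rewrite !arc_pt_chord; f_equal.
  apply pt_eq; unfold chord, padd, pscale, reverse_arc; simpl; ring.
Qed.

Lemma on_arc_reverse g p : on_arc (reverse_arc g) p <-> on_arc g p.
Proof.
  split; intros (t & Ht & ->); exists (1 - t); (split; [lra|]);
    rewrite ?arc_pt_reverse; f_equal; ring.
Qed.

Lemma valid_arc_reverse g : valid_arc g -> valid_arc (reverse_arc g).
Proof.
  unfold valid_arc, reverse_arc; simpl; intros (Ha & Hb & Hne & Hanti).
  repeat split; auto.
  intros E; apply Hanti; rewrite E; apply pt_eq; unfold pscale; simpl; ring.
Qed.

Definition pt_continuous (f : R -> pt) (t : R) : Prop :=
  continuity_pt (fun s => px (f s)) t /\ continuity_pt (fun s => py (f s)) t /\
  continuity_pt (fun s => pz (f s)) t.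

Lemma pt_continuous_dist f t : pt_continuous f t -> forall e, 0 < e ->
  exists d, 0 < d /\ forall s, Rabs (s - t) < d -> dist (f s) (f t) < e.
Proof.
  intros Hf e He.
  assert (Hcoord : forall c : R -> R, continuity_pt c t ->
            exists d, 0 < d /\ forall s, Rabs (s - t) < d -> Rabs (c s - c t) < e / 3).
  { intros c Hc; destruct (Hc (e / 3)) as (d & Hd & Hs); [lra|].
    exists d; split; [assumption|]; intros s Hst.
    destruct (Req_dec s t) as [->|Hne].
    - rewrite Rminus_diag, Rabs_R0; lra.
    - apply (Hs s); repeat split; auto. }
  destruct Hf as (Hx & Hy & Hz).
  destruct (Hcoord _ Hx) as (d1 & D1 & H1), (Hcoord _ Hy) as (d2 & D2 & H2),
    (Hcoord _ Hz) as (d3 & D3 & H3).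
  exists (Rmin d1 (Rmin d2 d3)); split; [repeat apply Rmin_pos; assumption|].
  intros s Hs.
  pose proof (Rmin_l d1 (Rmin d2 d3)); pose proof (Rmin_r d1 (Rmin d2 d3));
    pose proof (Rmin_l d2 d3); pose proof (Rmin_r d2 d3).
  specialize (H1 s ltac:(lra)); specialize (H2 s ltac:(lra)); specialize (H3 s ltac:(lra)).
  pose proof (dist_le_coords (f s) (f t)); lra.
Qed.

Lemma arc_pt_continuous g t : valid_arc g -> 0 <= t <= 1 -> pt_continuous (arc_pt g) t.
Proof.
  intros Hg Ht; pose proof (chord_dot_pos g t Hg Ht).
  assert (0 < sqrt (dot (chord g t) (chord g t))) by (apply sqrt_lt_R0; assumption).
  unfold pt_continuous, arc_pt, normalize, pnorm, dot, pscale, padd in *; simpl in *.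
  repeat split; reg; lra.
Qed.

Definition clamp (t : R) : R := Rmax 0 (Rmin 1 t).

Lemma clamp_range t : 0 <= clamp t <= 1.
Proof. unfold clamp, Rmax, Rmin; repeat destruct Rle_dec; lra. Qed.

Lemma clamp_id t : 0 <= t <= 1 -> clamp t = t.
Proof. intros; unfold clamp, Rmax, Rmin; repeat destruct Rle_dec; lra. Qed.

Lemma clamp_continuous t : continuity_pt clamp t.
Proof.
  intros e He; exists e; split; [assumption|]; intros s (_ & Hs); simpl in *; unfold R_dist in *.
  apply (Rle_lt_trans _ (Rabs (s - t))); [|assumption].
  pose proof (Rle_abs (s - t)); pose proof (Rle_abs (- (s - t))); rewrite Rabs_Ropp in *.
  unfold clamp, Rmax, Rmin; repeat destruct Rle_dec; apply Rabs_le; lra.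
Qed.

Lemma pt_continuous_clamp_comp f phi t :
  (forall t, 0 <= t <= 1 -> pt_continuous f t) -> continuity_pt phi t ->
  pt_continuous (fun s => f (clamp (phi s))) t.
Proof.
  intros Hf Hphi.
  assert (Hc : continuity_pt (fun s => clamp (phi s)) t)
    by (apply (continuity_pt_comp phi clamp); [assumption | apply clamp_continuous]).
  destruct (Hf _ (clamp_range (phi t))) as (Hx & Hy & Hz).
  repeat split; apply (continuity_pt_comp (fun s => clamp (phi s)) (fun r => _ (f r)));
    assumption.
Qed.

(* Gluing by a sum avoids a case split: for t <= 1/2 the second clamp is 0 and
   f2 0 = e cancels, for t >= 1/2 the first clamp is 1 and f1 1 = e cancels. *)
Definition path_concat (f1 f2 : R -> pt) (e : pt) (t : R) : pt :=
  padd (f1 (clamp (2 * t))) (padd (f2 (clamp (2 * t - 1))) (pscale (-1) e)).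

Lemma path_concat_l f1 f2 e t :
  f2 0 = e -> 0 <= t <= 1/2 -> path_concat f1 f2 e t = f1 (2 * t).
Proof.
  intros H Ht; unfold path_concat; rewrite (clamp_id (2 * t)) by lra.
  replace (clamp (2 * t - 1)) with 0 by (unfold clamp, Rmax, Rmin; repeat destruct Rle_dec; lra).
  rewrite H; apply pt_eq; unfold padd, pscale; simpl; ring.
Qed.

Lemma path_concat_r f1 f2 e t :
  f1 1 = e -> 1/2 <= t <= 1 -> path_concat f1 f2 e t = f2 (2 * t - 1).
Proof.
  intros H Ht; unfold path_concat; rewrite (clamp_id (2 * t - 1)) by lra.
  replace (clamp (2 * t)) with 1 by (unfold clamp, Rmax, Rmin; repeat destruct Rle_dec; lra).
  rewrite H; apply pt_eq; unfold padd, pscale; simpl; ring.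
Qed.

Lemma path_concat_continuous f1 f2 e :
  (forall t, pt_continuous f1 t) -> (forall t, pt_continuous f2 t) ->
  forall t, pt_continuous (path_concat f1 f2 e) t.
Proof.
  intros H1 H2 t.
  destruct (pt_continuous_clamp_comp f1 (fun s => 2 * s) t (fun t _ => H1 t) ltac:(reg))
    as (A1 & A2 & A3).
  destruct (pt_continuous_clamp_comp f2 (fun s => 2 * s - 1) t (fun t _ => H2 t) ltac:(reg))
    as (B1 & B2 & B3).
  unfold pt_continuous, path_concat, padd, pscale; simpl.
  repeat split; (apply (continuity_pt_plus _ _ t);
    [assumption | apply (continuity_pt_plus _ _ t); [assumption | reg]]).
Qed.

Definition inner_path (D : list arc) (Rg : pt -> Prop) (a b : pt) : Prop :=
  exists f : R -> pt, (forall t, pt_continuous f t) /\ f 0 = a /\ f 1 = b /\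
    (forall t, 0 <= t <= 1 -> on_D D (f t)) /\
    (forall t, 0 < t < 1 -> in_interior Rg (f t)).

Lemma inner_path_trans D Rg a e b :
  inner_path D Rg a e -> inner_path D Rg e b -> in_interior Rg e -> inner_path D Rg a b.
Proof.
  intros (f1 & C1 & F10 & F11 & D1 & I1) (f2 & C2 & F20 & F21 & D2 & I2) He.
  exists (path_concat f1 f2 e); split; [apply path_concat_continuous; assumption|].
  split; [rewrite path_concat_l by (auto; lra); rewrite Rmult_0_r; assumption|].
  split; [rewrite path_concat_r by (auto; lra); replace (2 * 1 - 1) with 1 by ring; assumption|].
  split; intros t Ht; destruct (Rlt_or_le t (1/2)).
  - rewrite path_concat_l by (auto; lra); apply D1; lra.
  - rewrite path_concat_r by (auto; lra); apply D2; lra.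
  - rewrite path_concat_l by (auto; lra); apply I1; lra.
  - rewrite path_concat_r by (auto; lra).
    destruct (Req_dec t (1/2)) as [->|]; [replace (2 * (1/2) - 1) with 0 by field; congruence|].
    apply I2; lra.
Qed.

Lemma inner_path_int_connected D Rg a b : inner_path D Rg a b -> int_connected D Rg a b.
Proof.
  intros (f & Hf & F0 & F1 & HD & HI); exists f; do 4 (split; [assumption|]).
  intros t _ e He; destruct (pt_continuous_dist f t (Hf t) e He) as (d & Hd & H).
  exists d; split; auto.
Qed.

Lemma in_interior_open Rg q : in_interior Rg q ->
  exists r, 0 < r /\ forall q', on_sphere q' -> dist q q' < r -> in_interior Rg q'.
Proof.
  intros (Hq & HRq & e & He & Hball); exists (e / 2); split; [lra|].
  intros q' Hq' Hd; split; [assumption|]; split; [apply Hball; auto; lra|].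
  exists (e / 2); split; [lra|]; intros q'' Hq'' Hd'; apply Hball; [assumption|].
  pose proof (dist_triangle q q' q''); lra.
Qed.

Lemma first_exit (P : R -> Prop) a b : a <= b -> P a ->
  (forall s, a <= s <= b -> P s ->
     exists d, 0 < d /\ forall u, a <= u <= b -> Rabs (u - s) < d -> P u) ->
  (forall u, a <= u <= b -> P u) \/
  exists s, a < s <= b /\ (forall u, a <= u < s -> P u) /\ ~ P s.
Proof.
  intros Hab Pa Hopen.
  destruct (classic (forall u, a <= u <= b -> P u)) as [|Hnot]; [left; assumption|right].
  set (E := fun s => a <= s <= b /\ forall u, a <= u <= s -> P u).
  assert (Ea : E a) by (split; [lra|]; intros u Hu; replace u with a by lra; assumption).
  destruct (completeness E) as (s & Hub & Hlub);
    [exists b; intros s (Hs & _); lra | exists a; assumption |].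
  assert (Hsb : s <= b) by (apply Hlub; intros s' (Hs' & _); lra).
  assert (Hbelow : forall u, a <= u < s -> P u).
  { intros u Hu; apply NNPP; intros Hu'.
    assert (s <= u); [|lra].
    apply Hlub; intros s' (Hs' & Hall); destruct (Rle_or_lt s' u); [assumption|].
    exfalso; apply Hu', Hall; lra. }
  assert (Has : a <= s) by (apply Hub; exact Ea).
  (* if P held at s, openness would push the supremum beyond s *)
  assert (Hstop : ~ P s).
  { intros Ps; destruct (Hopen s ltac:(lra) Ps) as (d & Hd & Hnear).
    destruct (Rlt_or_le s b) as [Hlt|Hge].
    - set (s' := Rmin (s + d / 2) b).
      assert (s < s' <= b) by (unfold s', Rmin; destruct Rle_dec; lra).
      assert (s' <= s + d / 2) by apply Rmin_l.
      assert (E s'); [|assert (s' <= s) by (apply Hub; assumption); lra].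
      split; [lra|]; intros u Hu; destruct (Rlt_or_le u s); [apply Hbelow; lra|].
      apply Hnear; [lra|]; apply Rabs_def1; lra.
    - apply Hnot; intros u Hu; destruct (Rlt_or_le u s); [apply Hbelow; lra|].
      replace u with s by lra; assumption. }
  exists s; repeat split; try assumption.
  destruct (Req_dec a s) as [<-|]; [contradiction | lra].
Qed.

Lemma arc_exit Rg g t0 : valid_arc g -> 0 <= t0 <= 1 -> in_interior Rg (arc_pt g t0) ->
  (forall u, t0 <= u <= 1 -> in_interior Rg (arc_pt g u)) \/
  exists s, t0 < s <= 1 /\ (forall u, t0 <= u < s -> in_interior Rg (arc_pt g u)) /\
    in_boundary Rg (arc_pt g s).
Proof.
  intros Hg Ht0 Hint.
  assert (Hnear : forall s, 0 <= s <= 1 -> forall e, 0 < e -> exists d, 0 < d /\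
            forall u, Rabs (u - s) < d -> dist (arc_pt g s) (arc_pt g u) < e).
  { intros s Hs e He; destruct (pt_continuous_dist _ _ (arc_pt_continuous g s Hg Hs) e He)
      as (d & Hd & Hu).
    exists d; split; [assumption|]; intros u Hus; rewrite dist_sym; auto. }
  destruct (first_exit (fun u => in_interior Rg (arc_pt g u)) t0 1) as [|(s & Hs & Hbelow & Hout)];
    [lra | assumption | | left; assumption | right].
  { intros s Hs Hins; destruct (in_interior_open Rg _ Hins) as (r & Hr & Hball).
    destruct (Hnear s ltac:(lra) r Hr) as (d & Hd & Hu); exists d; split; [assumption|].
    intros u Hu1 Hu2; apply Hball; [apply arc_pt_on_sphere|apply Hu]; auto; lra. }
  exists s; split; [assumption|]; split; [assumption|]; split; [|assumption].
  split; [apply arc_pt_on_sphere; auto; lra|].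
  intros e He; destruct (Hnear s ltac:(lra) e He) as (d & Hd & Hu).
  set (u := Rmax t0 (s - d / 2)).
  assert (t0 <= u < s) by (unfold u, Rmax; destruct Rle_dec; lra).
  assert (s - d / 2 <= u) by apply Rmax_r.
  exists (arc_pt g u); split; [apply Hbelow; assumption|].
  apply Hu, Rabs_def1; lra.
Qed.

(* For points p, q of the open hemisphere {h.v > 0}, the sign of [gap u h p q]
   compares u.p / h.p with u.q / h.q, i.e. a coordinate of the central
   projections of p and q onto the plane h.v = 1. *)
Definition gap (u h p q : pt) : R := dot u q * dot h p - dot u p * dot h q.

Definition lex_pos (a b : R) : Prop := 0 < a \/ (a = 0 /\ 0 < b).

Definition lex_lt (n m h p q : pt) : Prop := lex_pos (gap n h p q) (gap m h p q).

Lemma gap_cocycle u h p q r : dot h q * gap u h p r = dot h r * gap u h p q + dot h p * gap u h q r.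
Proof. unfold gap; ring. Qed.

Lemma lex_lt_trans n m h p q r : 0 < dot h p -> 0 < dot h q -> 0 < dot h r ->
  lex_lt n m h p q -> lex_lt n m h q r -> lex_lt n m h p r.
Proof.
  unfold lex_lt, lex_pos; intros Hp Hq Hr H1 H2.
  pose proof (gap_cocycle n h p q r) as In; pose proof (gap_cocycle m h p q r) as Im.
  destruct H1 as [A|(A & B)], H2 as [C|(C & E)].
  - left; nra.
  - left; rewrite C in In; nra.
  - left; rewrite A in In; nra.
  - right; rewrite A, C in In; split; nra.
Qed.

Lemma lex_pos_mul a b c : lex_pos a b -> lex_pos (c * a) (c * b) <-> 0 < c.
Proof.
  unfold lex_pos; intros [A|(A & B)]; split.
  - intros [C|(C & E)]; [nra|].
    apply Rmult_integral in C as [->|]; lra.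
  - left; nra.
  - subst a; intros [C|(C & E)]; nra.
  - subst a; right; split; [ring | nra].
Qed.

Lemma gap_arc_pt u h g t1 t2 :
  gap u h (arc_pt g t1) (arc_pt g t2) =
  / pnorm (chord g t1) * / pnorm (chord g t2) * (t2 - t1) * gap u h (src g) (dst g).
Proof. unfold arc_pt, normalize, gap, dot, chord, padd, pscale; simpl; ring. Qed.

Lemma lex_lt_arc_pt n m h g t1 t2 : valid_arc g -> 0 <= t1 <= 1 -> 0 <= t2 <= 1 ->
  lex_lt n m h (src g) (dst g) ->
  lex_lt n m h (arc_pt g t1) (arc_pt g t2) <-> t1 < t2.
Proof.
  intros Hg Ht1 Ht2 Hdir; unfold lex_lt; rewrite !gap_arc_pt.
  assert (Hk : forall t, 0 <= t <= 1 -> 0 < / pnorm (chord g t))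
    by (intros; apply Rinv_0_lt_compat, sqrt_lt_R0, chord_dot_pos; assumption).
  assert (HK : 0 < / pnorm (chord g t1) * / pnorm (chord g t2))
    by (apply Rmult_lt_0_compat; apply Hk; assumption).
  rewrite (lex_pos_mul _ _ _ Hdir).
  split; intros; [|apply Rmult_lt_0_compat; lra].
  destruct (Rlt_or_le t1 t2); [assumption | nra].
Qed.

Lemma gap_reverse u h g :
  gap u h (src (reverse_arc g)) (dst (reverse_arc g)) = - gap u h (src g) (dst g).
Proof. unfold gap, reverse_arc; simpl; ring. Qed.

Definition cross (a b : pt) : pt :=
  Pt (py a * pz b - pz a * py b) (pz a * px b - px a * pz b) (px a * py b - py a * px b).

Definition det3 (a b c : pt) : R := dot a (cross b c).

Lemma orthogonal_to_basis a b c v : det3 a b c <> 0 ->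
  dot a v = 0 -> dot b v = 0 -> dot c v = 0 -> v = origin.
Proof.
  intros Hdet Ha Hb Hc.
  (* Cramer: det3 a b c * v = (a.v) (b x c) + (b.v) (c x a) + (c.v) (a x b) *)
  assert (Hcramer : pscale (det3 a b c) v =
            padd (pscale (dot a v) (cross b c))
              (padd (pscale (dot b v) (cross c a)) (pscale (dot c v) (cross a b))))
    by (apply pt_eq; unfold det3, cross, dot, padd, pscale; simpl; ring).
  rewrite Ha, Hb, Hc in Hcramer.
  apply (f_equal px) in Hcramer as Ex; apply (f_equal py) in Hcramer as Ey;
    apply (f_equal pz) in Hcramer as Ez.
  unfold padd, pscale in Ex, Ey, Ez; simpl in Ex, Ey, Ez.
  apply pt_eq; simpl; [apply (Rmult_eq_reg_l (det3 a b c)) ..]; try lra; assumption.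
Qed.

Lemma cross_cross a b : cross a (cross b a) = padd (pscale (dot a a) b) (pscale (- dot a b) a).
Proof. apply pt_eq; unfold cross, dot, padd, pscale; simpl; ring. Qed.

Lemma det3_cross n h : det3 n (cross n h) h = - dot (cross n h) (cross n h).
Proof. unfold det3, cross, dot; simpl; ring. Qed.

Lemma dot_pscale c u v : dot (pscale c u) v = c * dot u v.
Proof. unfold dot, pscale; simpl; ring. Qed.

Lemma cross_neq0 n h x : on_sphere n -> on_sphere h -> dot n x = 0 -> 0 < dot h x ->
  cross n h <> origin.
Proof.
  unfold on_sphere; intros Hn Hh Hnx Hhx Hc.
  assert (Hpar : n = pscale (dot h n) h).
  { pose proof (cross_cross h n) as E; rewrite Hc, Hh in E.
    apply (f_equal px) in E as Ex; apply (f_equal py) in E as Ey; apply (f_equal pz) in E as Ez.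
    unfold cross, padd, pscale in Ex, Ey, Ez; simpl in Ex, Ey, Ez.
    apply pt_eq; unfold pscale; simpl; lra. }
  rewrite Hpar, dot_pscale in Hnx.
  assert (Hhn : dot h n = 0) by (apply Rmult_integral in Hnx as [|]; lra).
  rewrite Hpar, Hhn, !dot_pscale in Hn; lra.
Qed.

Lemma det3_cross_neq0 n h x : on_sphere n -> on_sphere h -> dot n x = 0 -> 0 < dot h x ->
  det3 n (cross n h) h <> 0.
Proof.
  intros Hn Hh Hnx Hhx; rewrite det3_cross; intros E.
  apply (cross_neq0 n h x); auto; apply dot_self_eq0; lra.
Qed.

Lemma det3_opp n m h : det3 (pscale (-1) n) (pscale (-1) m) h = det3 n m h.
Proof. unfold det3, cross, dot, pscale; simpl; ring. Qed.

Lemma lex_pos_total a b : ~ (a = 0 /\ b = 0) -> lex_pos a b \/ lex_pos (- a) (- b).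
Proof.
  unfold lex_pos; intros Hab.
  destruct (Rtotal_order a 0) as [|[->|]]; [right; left; lra| |left; left; lra].
  destruct (Rtotal_order b 0) as [|[->|]]; [right; right; lra|tauto|left; right; lra].
Qed.

Lemma arc_gap_neq0 n m h g t : det3 n m h <> 0 -> valid_arc g -> 0 <= t <= 1 ->
  0 < dot h (arc_pt g t) -> ~ (gap n h (src g) (dst g) = 0 /\ gap m h (src g) (dst g) = 0).
Proof.
  intros Hdet (Ha & Hb & Hne & Hanti) Ht Hpos (Gn & Gm).
  set (la := dot h (src g)) in *; set (mu := dot h (dst g)) in *.
  (* the gaps are the dot products with v := la b - mu a, which is also orthogonal to h *)
  assert (Hv : padd (pscale la (dst g)) (pscale (- mu) (src g)) = origin).
  { apply (orthogonal_to_basis n m h); [assumption| rewrite <- Gn | rewrite <- Gm |];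
      unfold la, mu, gap, dot, padd, pscale; simpl; ring. }
  apply (f_equal px) in Hv as Ex; apply (f_equal py) in Hv as Ey; apply (f_equal pz) in Hv as Ez.
  unfold padd, pscale in Ex, Ey, Ez; simpl in Ex, Ey, Ez.
  unfold on_sphere, dot in Ha, Hb.
  assert (Hsq : la * la = mu * mu).
  { transitivity (la * la * (px (dst g) * px (dst g) + py (dst g) * py (dst g)
                             + pz (dst g) * pz (dst g))); [rewrite Hb; ring|].
    transitivity (mu * mu * (px (src g) * px (src g) + py (src g) * py (src g)
                             + pz (src g) * pz (src g))); [|rewrite Ha; ring].
    replace (la * la * (px (dst g) * px (dst g) + py (dst g) * py (dst g) + pz (dst g) * pz (dst g)))
      with ((la * px (dst g)) * (la * px (dst g)) + (la * py (dst g)) * (la * py (dst g))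
            + (la * pz (dst g)) * (la * pz (dst g))) by ring.
    replace (la * px (dst g)) with (mu * px (src g)) by lra.
    replace (la * py (dst g)) with (mu * py (src g)) by lra.
    replace (la * pz (dst g)) with (mu * pz (src g)) by lra.
    ring. }
  destruct (Req_dec la 0) as [Hla|Hla].
  - assert (Hmu : mu = 0) by nra.
    revert Hpos; rewrite arc_pt_chord; unfold normalize.
    replace (dot h (pscale (/ pnorm (chord g t)) (chord g t)))
      with (/ pnorm (chord g t) * ((1 - t) * la + t * mu))
      by (unfold la, mu, chord, dot, padd, pscale; simpl; ring).
    rewrite Hla, Hmu; lra.
  - assert (Hlm : (la - mu) * (la + mu) = 0) by nra.
    apply Rmult_integral in Hlm as [Hlm|Hlm]; [apply Hne | apply Hanti];
      apply pt_eq; unfold pscale; simpl; apply (Rmult_eq_reg_l la); auto; nra.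
Qed.

Section Walk.

Variables (Rg : pt -> Prop) (D : list arc) (n m h : pt).
Hypothesis Rg_in_hemisphere : forall p, Rg p -> 0 < dot h p.
Hypothesis Rg_closed : forall p, in_closure Rg p -> Rg p.
Hypothesis D_diagram : SD D.
Hypothesis nmh_basis : det3 n m h <> 0.

Definition arc_of (g : arc) : Prop := In g D \/ In (reverse_arc g) D.

Definition inner_D_point (p : pt) : Prop :=
  in_interior Rg p /\ exists g, arc_of g /\ in_relint g p.

Definition ahead (g : arc) (p : pt) : Prop :=
  exists q, on_arc g q /\ 0 < dot h q /\ lex_lt n m h p q.

Definition reaches_boundary (p : pt) : Prop :=
  exists y g, In g D /\ thrusts g Rg y /\ lex_lt n m h p y /\ inner_path D Rg y p.

Lemma arc_of_valid g : arc_of g -> valid_arc g.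
Proof.
  destruct D_diagram as (_ & Hvalid & _); intros [H|H]; [auto|].
  rewrite <- (reverse_arcK g); apply valid_arc_reverse; auto.
Qed.

Lemma arc_of_reverse g : arc_of g -> arc_of (reverse_arc g).
Proof. unfold arc_of; rewrite reverse_arcK; tauto. Qed.

Lemma arc_of_In g : arc_of g -> exists g', In g' D /\ forall q, on_arc g' q <-> on_arc g q.
Proof.
  intros [H|H]; [exists g | exists (reverse_arc g)]; split; auto; [tauto | apply on_arc_reverse].
Qed.

Lemma arc_of_on_D g q : arc_of g -> on_arc g q -> on_D D q.
Proof.
  intros Hg Hq; destruct (arc_of_In g Hg) as (g' & Hg' & E).
  exists g'; split; [|apply E]; assumption.
Qed.

Lemma arc_of_thrusts g y : arc_of g -> thrusts g Rg y -> exists g', In g' D /\ thrusts g' Rg y.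
Proof.
  intros Hg (Hy & Hb & q & Hq & Hint); destruct (arc_of_In g Hg) as (g' & Hg' & E).
  exists g'; split; [assumption|]; split; [apply E; assumption|].
  split; [assumption|]; exists q; split; [apply E|]; assumption.
Qed.

Lemma arc_of_dst_blocked g : arc_of g -> exists c, arc_of c /\ in_relint c (dst g).
Proof.
  destruct D_diagram as (_ & _ & _ & Hblock).
  intros [H|H]; [destruct (Hblock g H) as (_ & c & Hc & Hrel)
                | destruct (Hblock _ H) as ((c & Hc & Hrel) & _)];
    exists c; split; try left; assumption.
Qed.

Lemma inner_path_along_arc g s1 s2 : arc_of g -> 0 <= s2 -> s2 < s1 -> s1 <= 1 ->
  (forall u, s2 <= u < s1 -> in_interior Rg (arc_pt g u)) ->
  inner_path D Rg (arc_pt g s1) (arc_pt g s2).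
Proof.
  intros Hg Hs2 Hs Hs1 Hint; pose proof (arc_of_valid g Hg) as Hv.
  exists (fun tau => arc_pt g (clamp (s1 + tau * (s2 - s1)))).
  split; [intros t; apply pt_continuous_clamp_comp; [intros; apply arc_pt_continuous; auto | reg]|].
  split; [rewrite clamp_id; [f_equal; ring | lra]|].
  split; [rewrite clamp_id; [f_equal; ring | lra]|].
  split; intros t Ht.
  - apply (arc_of_on_D g); [assumption|]; exists (clamp (s1 + t * (s2 - s1))).
    split; [apply clamp_range | reflexivity].
  - assert (0 < t * (s1 - s2) < s1 - s2) by (split; nra).
    rewrite clamp_id by lra; apply Hint; lra.
Qed.

Lemma ahead_anti g p e : in_interior Rg p -> in_interior Rg e -> lex_lt n m h p e ->
  ahead g e -> ahead g p.
Proof.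
  intros Hp He Hpe (q & Hq & Hhq & Heq); exists q; split; [assumption|]; split; [assumption|].
  apply (lex_lt_trans n m h p e q); auto; apply Rg_in_hemisphere; [apply Hp | apply He].
Qed.

Lemma inner_D_point_oriented p : inner_D_point p ->
  exists g t0, arc_of g /\ 0 < t0 < 1 /\ p = arc_pt g t0 /\ lex_lt n m h (src g) (dst g).
Proof.
  intros (Hint & g & Hg & t0 & Ht0 & ->).
  assert (Hpos : 0 < dot h (arc_pt g t0)) by (apply Rg_in_hemisphere, Hint).
  destruct (lex_pos_total _ _ (arc_gap_neq0 n m h g t0 nmh_basis (arc_of_valid g Hg)
                                 ltac:(lra) Hpos)) as [Hdir|Hdir].
  - exists g, t0; repeat split; auto; lra.
  - exists (reverse_arc g), (1 - t0); split; [apply arc_of_reverse; assumption|].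
    split; [lra|]; split; [rewrite arc_pt_reverse; f_equal; ring|].
    unfold lex_lt; rewrite !gap_reverse; assumption.
Qed.

Lemma walk_step p : inner_D_point p ->
  reaches_boundary p \/
  exists e g, inner_D_point e /\ lex_lt n m h p e /\ inner_path D Rg e p /\
    In g D /\ ahead g p /\ ~ ahead g e.
Proof.
  intros Hp; destruct (inner_D_point_oriented p Hp) as (g & t0 & Hg & Ht0 & -> & Hdir).
  pose proof (arc_of_valid g Hg) as Hv.
  assert (Hmono : forall t1 t2, 0 <= t1 <= 1 -> 0 <= t2 <= 1 ->
            lex_lt n m h (arc_pt g t1) (arc_pt g t2) <-> t1 < t2)
    by (intros; apply lex_lt_arc_pt; assumption).
  destruct Hp as (Hint & _).
  destruct (arc_exit Rg g t0 Hv ltac:(lra) Hint) as [Hall|(s & Hs & Hbelow & Hbd)].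
  - right.
    assert (He : arc_pt g 1 = dst g) by (apply arc_pt_1, Hv).
    assert (Heint : in_interior Rg (arc_pt g 1)) by (apply Hall; lra).
    destruct (arc_of_dst_blocked g Hg) as (c & Hc & Hrel).
    destruct (arc_of_In g Hg) as (gD & HgD & Eg).
    exists (arc_pt g 1), gD; split; [split; [|exists c; rewrite He]; auto|].
    split; [apply Hmono; lra|].
    split; [apply inner_path_along_arc; auto; try lra; intros u Hu; apply Hall; lra|].
    split; [assumption|]; split.
    + exists (arc_pt g 1); split; [apply Eg; exists 1; split; [lra | reflexivity]|].
      split; [apply Rg_in_hemisphere, Heint | apply Hmono; lra].
    + intros (q & Hq & _ & Hlt); apply Eg in Hq as (t & Ht & ->).
      apply Hmono in Hlt; lra.
  - left.
    assert (Hth : thrusts g Rg (arc_pt g s)).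
    { split; [exists s; split; [lra | reflexivity]|]; split; [assumption|].
      exists (arc_pt g t0); split; [exists t0; split; [lra | reflexivity] | assumption]. }
    destruct (arc_of_thrusts g _ Hg Hth) as (g' & Hg' & Hth').
    exists (arc_pt g s), g'; split; [assumption|]; split; [assumption|].
    split; [apply Hmono; lra|].
    apply inner_path_along_arc; auto; lra.
Qed.

(* Termination: every step leaves behind an arc of D that had a point ahead of
   the walker, and the set of such arcs only shrinks. *)
Lemma walk_bounded p (L : list arc) : inner_D_point p ->
  (forall g, In g D -> ahead g p -> In g L) -> reaches_boundary p.
Proof.
  remember (length L) as k eqn:Hk; revert p L Hk.
  induction k as [k IH] using lt_wf_ind; intros p L Hk Hp HL.
  destruct (walk_step p Hp) as [|(e & g & He & Hpe & Hpath & Hg & Hgp & Hge)]; [assumption|].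
  destruct (in_split g L (HL g Hg Hgp)) as (L1 & L2 & ->).
  destruct (IH (length (L1 ++ L2)) ltac:(rewrite !length_app in *; simpl in Hk; lia)
              e (L1 ++ L2) eq_refl He) as (y & g' & Hg' & Hth & Hey & Hye).
  { intros g'' Hg'' Hahead.
    assert (Hin : In g'' (L1 ++ g :: L2)).
    { apply HL; [assumption|]; apply (ahead_anti g'' p e); [apply Hp | apply He | assumption..]. }
    apply in_app_iff in Hin as [|[<-|]]; [| contradiction |]; apply in_or_app; auto. }
  exists y, g'; split; [assumption|]; split; [assumption|]; split.
  - apply (lex_lt_trans n m h p e y); auto;
      [apply Rg_in_hemisphere, Hp | apply Rg_in_hemisphere, He |].
    apply Rg_in_hemisphere, Rg_closed; destruct Hth as (_ & (Hcl & _) & _); assumption.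
  - apply (inner_path_trans D Rg y e p); auto; apply He.
Qed.

Lemma inner_D_point_reaches_boundary p : inner_D_point p -> reaches_boundary p.
Proof. intros Hp; apply (walk_bounded p D Hp); auto. Qed.

End Walk.

Lemma on_D_in_relint D x : SD D -> on_D D x -> exists g, In g D /\ in_relint g x.
Proof.
  intros (_ & Hvalid & _ & Hblock) (g & Hg & t & Ht & ->).
  destruct (Hvalid g Hg) as (Ha & Hb & _).
  destruct (Req_dec t 0) as [->|]; [rewrite arc_pt_0 by assumption; apply (Hblock g Hg)|].
  destruct (Req_dec t 1) as [->|]; [rewrite arc_pt_1 by assumption; apply (Hblock g Hg)|].
  exists g; split; [|exists t; split; [lra|]]; auto.
Qed.

Lemma lex_lt_from_great_circle n m h x y : dot n x = 0 -> 0 < dot h x ->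
  lex_lt n m h x y -> 0 <= dot n y.
Proof.
  unfold lex_lt, lex_pos, gap; intros Hnx Hhx Hlt; rewrite Hnx in Hlt.
  destruct (Rle_or_lt 0 (dot n y)); [assumption|]; nra.
Qed.

Lemma lex_lt_opp_asym n m h p q :
  lex_lt n m h p q -> ~ lex_lt (pscale (-1) n) (pscale (-1) m) h p q.
Proof. unfold lex_lt, lex_pos, gap; rewrite !dot_pscale; lra. Qed.

Theorem mainTheorem19 :
  forall (Rg : pt -> Prop) (D : list arc) (x n : pt),
    spherical_polygon Rg -> in_open_hemisphere Rg -> SD D ->
    on_D D x -> in_interior Rg x ->
    (* the great circle gamma = {p on sphere | dot n p = 0}, through x *)
    on_sphere n -> dot n x = 0 ->
    exists (y z : pt) (g h : arc),
      In g D /\ In h D /\ thrusts g Rg y /\ thrusts h Rg z /\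
      y <> z /\ 0 <= dot n y /\ dot n z <= 0 /\
      int_connected D Rg y x /\ int_connected D Rg z x.
Proof.
  intros Rg D x n (_ & Hclosed & _) (h & Hh & Hhemi) HD HxD Hx Hn Hnx.
  assert (Hhx : 0 < dot h x) by (apply Hhemi, Hx).
  assert (Hbasis : det3 n (cross n h) h <> 0) by (apply (det3_cross_neq0 n h x); assumption).
  assert (Hstart : inner_D_point Rg D x).
  { split; [assumption|]; destruct (on_D_in_relint D x HD HxD) as (g & Hg & Hrel).
    exists g; split; [left|]; assumption. }
  destruct (inner_D_point_reaches_boundary Rg D n (cross n h) h Hhemi Hclosed HD Hbasis x Hstart)
    as (y & g & Hg & Hthy & Hxy & Hpy).
  destruct (inner_D_point_reaches_boundary Rg D (pscale (-1) n) (pscale (-1) (cross n h)) h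
              Hhemi Hclosed HD ltac:(rewrite det3_opp; assumption) x Hstart)
    as (z & g' & Hg' & Hthz & Hxz & Hpz).
  exists y, z, g, g'; do 4 (split; [assumption|]).
  split; [intros <-; apply (lex_lt_opp_asym _ _ _ _ _ Hxy Hxz)|].
  split; [apply (lex_lt_from_great_circle n (cross n h) h x); assumption|].
  split.
  - pose proof (lex_lt_from_great_circle _ _ h x z ltac:(rewrite dot_pscale, Hnx; ring) Hhx Hxz).
    rewrite dot_pscale in *; lra.
  - split; apply inner_path_int_connected; assumption.
Qed.
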